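(* Let $\mathbb{R}_1=\{x\in\mathbb{R}: x\ge 1\}$, $\mathbb{N}_1=\{1,2,3,\dots\}$, and let $U:\mathbb{R}_1\to\mathbb{R}_1$ be defined by \[ U(x)=\begin{cases} \dfrac{x}{2} & \text{if } \lfloor x\rfloor \text{ is even},\\[4pt] \dfrac{3x+1}{2} & \text{if } \lfloor x\rfloor \text{ is odd}.\end{cases}\] If $x\in\mathbb{R}_1$ and $k\in\mathbb{N}_1$ satisfy $U^k(x)=x$, then $x\in\mathbb{N}_1$. Equivalently, the only $U$-cycles are the $T$-cycles, where $T=U|_{\mathbb{N}_1}$ is the integer $3n+1$ function $T(n)=n/2$ for even $n$, $T(n)=(3n+1)/2$ for odd $n$.
   Context: $\lfloor x\rfloor$ denotes the largest integer $\le x$. For a function $f:X\to X$, $f^0$ is the identity and $f^i=f\circ f^{i-1}$. An $f$-cycle is the trajectory $(f^i(z))_{i\ge 0}$ of a point $z$ with $f^n(z)=z$ for some $n\ge 1$. Note that $U$ restricted to $\mathbb{N}_1$ coincides with $T$. *)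

From Stdlib Require Import Reals ZArith.
Open Scope R_scope.

(* floor x = Int_part x (= up x - 1), the largest integer <= x. *)
Definition U (x : R) : R :=
  if Z.even (Int_part x) then x / 2 else (3 * x + 1) / 2.

Fixpoint iter_R (k : nat) (f : R -> R) (x : R) : R :=
  match k with O => x | S k' => f (iter_R k' f x) end.

From Stdlib Require Import Reals ZArith Lra Lia.
Open Scope R_scope.

(* Let c = {x}/x. The region {y > 0 | {y} <= c y} is U-invariant: an even
   step halves both y and (at most) its fractional part, and an odd step
   multiplies {y} by at most 3/2 while multiplying y by more than 3/2.
   The odd step is therefore strict when c > 0, and strictness persists.
   A cycle through a non-integer x must contain an odd step (otherwise
   U^k x = x / 2^k), giving {x} < c x = {x}. *)

Definition frac (y : R) : R := y - IZR (Int_part y).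

Lemma frac_bounds (y : R) : 0 <= frac y < 1.
Proof. unfold frac; destruct (base_Int_part y); lra. Qed.

Lemma frac_le_sub_int (y : R) (w : Z) : IZR w <= y -> frac y <= y - IZR w.
Proof.
  intros Hw; unfold frac; destruct (base_Int_part y) as [Hlo Hhi].
  assert (Hlt : (w < Int_part y + 1)%Z).
  { apply lt_IZR; rewrite plus_IZR; simpl; lra. }
  assert (IZR w <= IZR (Int_part y)) by (apply IZR_le; lia).
  lra.
Qed.

Lemma frac_half_even (y : R) :
  Z.even (Int_part y) = true -> frac (y / 2) <= frac y / 2.
Proof.
  intros Heven; apply Z.even_spec in Heven as [q Hq].
  destruct (base_Int_part y) as [Hlo _].
  rewrite Hq, mult_IZR in Hlo.
  assert (Hq2 : IZR q <= y / 2) by (simpl in Hlo; lra).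
  pose proof (frac_le_sub_int (y / 2) q Hq2).
  unfold frac at 2; rewrite Hq, mult_IZR; simpl; lra.
Qed.

Lemma frac_odd_step (y : R) :
  Z.even (Int_part y) = false -> frac ((3 * y + 1) / 2) <= 3 * frac y / 2.
Proof.
  intros Hodd.
  assert (Hodd' : Z.odd (Int_part y) = true)
    by (rewrite <- Z.negb_even, Hodd; reflexivity).
  apply Z.odd_spec in Hodd' as [q Hq].
  destruct (base_Int_part y) as [Hlo _].
  rewrite Hq, plus_IZR, mult_IZR in Hlo.
  assert (Hq3 : IZR (3 * q + 2) <= (3 * y + 1) / 2)
    by (rewrite plus_IZR, mult_IZR; simpl in *; lra).
  pose proof (frac_le_sub_int _ _ Hq3).
  unfold frac at 2; rewrite Hq.
  rewrite !plus_IZR, !mult_IZR in *; simpl in *; lra.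
Qed.

Lemma U_pos (y : R) : 0 < y -> 0 < U y.
Proof. unfold U; destruct (Z.even (Int_part y)); lra. Qed.

Lemma iter_U_pos (x : R) (i : nat) : 0 < x -> 0 < iter_R i U x.
Proof. intros Hx; induction i; simpl; [lra | now apply U_pos]. Qed.

Section FracRatio.

Variable c : R.
Hypothesis c_ge0 : 0 <= c.

Lemma frac_le_U (y : R) : 0 < y -> frac y <= c * y -> frac (U y) <= c * U y.
Proof.
  intros Hy Hle; pose proof (frac_bounds y).
  unfold U; destruct (Z.even (Int_part y)) eqn:E.
  - pose proof (frac_half_even y E); lra.
  - pose proof (frac_odd_step y E); nra.
Qed.

Lemma frac_lt_U (y : R) : 0 < y -> frac y < c * y -> frac (U y) < c * U y.
Proof.
  intros Hy Hlt.
  unfold U; destruct (Z.even (Int_part y)) eqn:E.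
  - pose proof (frac_half_even y E); lra.
  - pose proof (frac_odd_step y E); nra.
Qed.

Lemma frac_lt_U_odd (y : R) : 0 < c -> 0 < y -> frac y <= c * y ->
  Z.even (Int_part y) = false -> frac (U y) < c * U y.
Proof.
  intros Hc Hy Hle E; unfold U; rewrite E.
  pose proof (frac_odd_step y E); nra.
Qed.

Lemma iter_U_frac_le (x : R) (i : nat) :
  0 < x -> frac x <= c * x -> frac (iter_R i U x) <= c * iter_R i U x.
Proof.
  intros Hx Hle; induction i as [|i IH]; simpl; [exact Hle|].
  exact (frac_le_U _ (iter_U_pos x i Hx) IH).
Qed.

Lemma iter_U_halving_or_frac_lt (x : R) (i : nat) :
  0 < c -> 0 < x -> frac x <= c * x ->
  iter_R i U x * 2 ^ i = x \/ frac (iter_R i U x) < c * iter_R i U x.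
Proof.
  intros Hc Hx Hle; induction i as [|i [Hhalf | Hlt]]; simpl.
  - left; lra.
  - pose proof (iter_U_pos x i Hx) as Hpos.
    destruct (Z.even (Int_part (iter_R i U x))) eqn:E.
    + left; unfold U at 1; rewrite E.
      transitivity (iter_R i U x * 2 ^ i); [field | exact Hhalf].
    + right; exact (frac_lt_U_odd _ Hc Hpos (iter_U_frac_le x i Hx Hle) E).
  - right; exact (frac_lt_U _ (iter_U_pos x i Hx) Hlt).
Qed.

End FracRatio.

Lemma U_periodic_frac0 (x : R) (k : nat) :
  0 < x -> (1 <= k)%nat -> iter_R k U x = x -> frac x = 0.
Proof.
  intros Hx Hk Hcyc; pose proof (frac_bounds x) as [Hf0 _].
  destruct (Rle_lt_or_eq_dec 0 (frac x) Hf0) as [Hpos | Hzero]; [|auto].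
  exfalso; set (c := frac x / x).
  assert (Hc : 0 < c) by (apply Rdiv_lt_0_compat; lra).
  assert (Hcx : c * x = frac x) by (unfold c; field; lra).
  assert (H2k : 2 <= 2 ^ k).
  { destruct k as [|k]; [lia|]; simpl.
    pose proof (pow_R1_Rle 2 k ltac:(lra)); lra. }
  destruct (iter_U_halving_or_frac_lt c (Rlt_le _ _ Hc) x k Hc Hx
              (Req_le _ _ (eq_sym Hcx))) as [Hhalf | Hlt];
    rewrite Hcyc in *; nra.
Qed.

Lemma frac0_nat (x : R) :
  1 <= x -> frac x = 0 -> exists n : nat, (1 <= n)%nat /\ x = INR n.
Proof.
  intros Hx Hz; unfold frac in Hz.
  assert (Hge : (1 <= Int_part x)%Z) by (apply le_IZR; simpl; lra).
  exists (Z.to_nat (Int_part x)); split; [lia|].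
  rewrite INR_IZR_INZ, Z2Nat.id by lia; lra.
Qed.

Theorem theorem1 (x : R) (k : nat) :
  1 <= x -> (1 <= k)%nat -> iter_R k U x = x ->
  exists n : nat, (1 <= n)%nat /\ x = INR n.
Proof.
  intros Hx Hk Hcyc.
  apply frac0_nat; [exact Hx|].
  exact (U_periodic_frac0 x k ltac:(lra) Hk Hcyc).
Qed.
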